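(* Let $X$ be a Hausdorff topological space and $\mu:X^k\to X$ a continuous $k$-mean whose barycentric operator $\beta$ is power convergent. Define $\tilde\mu:X^{k+1}\to X$ by $\tilde\mu(\mathbf{x})=x^*$ where $\lim_n\beta^n(\mathbf{x})=(x^*,\ldots,x^* )$. Then: (i) $\tilde\mu$ is a $(k+1)$-mean on $X$ that is a $\beta$-invariant extension of $\mu$; (ii) any continuous $(k+1)$-mean on $X$ that is a $\beta$-invariant extension of $\mu$ equals $\tilde\mu$; (iii) if $\mu$ is symmetric, so is $\tilde\mu$.
   Context: A $k$-mean on $X$ is a map $\mu:X^k\to X$ with $\mu(x,\ldots,x)=x$; it is symmetric if it is invariant under permutations of its arguments. The barycentric operator $\beta=\beta_\mu:X^{k+1}\to X^{k+1}$ is $\beta(\mathbf{x})=(\mu(\pi_{\neq1}\mathbf{x}),\ldots,\mu(\pi_{\neq k+1}\mathbf{x}))$ where $\pi_{\neq j}(x_1,\ldots,x_{k+1})=(x_1,\ldots,x_{j-1},x_{j+1},\ldots,x_{k+1})$. $\beta$ is power convergent if for each $\mathbf{x}\in X^{k+1}$, $\lim_n\beta^n(\mathbf{x})=(x^*,\ldots,x^* )$ for some $x^*\in X$. A $(k+1)$-mean $\nu$ is a $\beta$-invariant extension of $\mu$ if $\nu\circ\beta_\mu=\nu$. *)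

From HB Require Import structures.
From mathcomp Require Import all_boot all_order fingroup perm.
From mathcomp Require Import boolp classical_sets topology.
Set Implicit Arguments. Unset Strict Implicit. Unset Printing Implicit Defensive.
Local Open Scope classical_set_scope.

(* X^k is rendered as {ptws 'I_k -> X}: functions 'I_k -> X with the
   product (pointwise) topology. *)
Notation tup X k := {ptws 'I_k -> X}.

Definition cst_tup (X : Type) (k : nat) (x : X) : tup X k := fun _ => x.
Arguments cst_tup {X} k x.

Definition is_mean (X : Type) (k : nat) (mu : tup X k -> X) : Prop :=
  forall x : X, mu (cst_tup k x) = x.

Definition is_symmetric (X : Type) (k : nat) (mu : tup X k -> X) : Prop :=
  forall (s : 'S_k) (x : tup X k), mu ((fun i => x (s i)) : tup X k) = mu x.

Definition pi_neq (X : Type) (k : nat) (j : 'I_k.+1) (x : tup X k.+1) : tup X k :=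
  fun i => x (lift j i).

Definition beta (X : Type) (k : nat) (mu : tup X k -> X)
  (x : tup X k.+1) : tup X k.+1 :=
  fun j => mu (pi_neq j x).

Definition power_convergent (X : topologicalType) (k : nat)
  (mu : tup X k -> X) : Prop :=
  forall x : tup X k.+1, exists xs : X,
    (fun n : nat => iter n (beta mu) x) @ \oo --> cst_tup k.+1 xs.

Definition beta_invariant_ext (X : Type) (k : nat) (mu : tup X k -> X)
  (nu : tup X k.+1 -> X) : Prop :=
  forall x, nu (beta mu x) = nu x.

From HB Require Import structures.
From mathcomp Require Import all_boot all_order fingroup perm.
From mathcomp Require Import boolp classical_sets topology.
Local Open Scope classical_set_scope.

(* The orbit of [beta mu (x)] is the orbit of [x] shifted by one step, so both
   tuples have the same limit; a mean is a fixed point of [beta mu] on constant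
   tuples.  A continuous [beta]-invariant [nu] is constant along the orbit of
   [x], hence [nu x = nu (mut x, ..., mut x) = mut x].  When [mu] is symmetric,
   [beta mu] commutes with permuting the coordinates, so the orbit of a permuted
   tuple is the permuted orbit and converges to the same constant tuple. *)

Lemma iter_morph {T U : Type} {f : T -> T} {g : U -> U} {h : T -> U} :
  {morph h : x / f x >-> g x} -> forall n, {morph h : x / iter n f x >-> iter n g x}.
Proof. by move=> hfg; elim=> [//|n IHn] x /=; rewrite hfg IHn. Qed.

Lemma cvg_succn {T : topologicalType} {u : nat -> T} {l : T} :
  u @ \oo --> l -> (fun n => u n.+1) @ \oo --> l.
Proof.
move=> ul; have := cvg_comp _ _ (cvg_addnr 1) ul.
by under [X in X @ \oo --> l -> _]eq_fun => n do rewrite /= addn1.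
Qed.

Lemma cvg_ptws_app {U : eqType} {X : topologicalType} {T : Type}
    {F : set_system T} {u : T -> {ptws U -> X}} {f : {ptws U -> X}} (i : U) :
  u @ F --> f -> (fun t => u t i) @ F --> f i.
Proof. by move=> uf; exact: (cvg_comp _ _ uf (@proj_continuous _ _ i f)). Qed.

Section UnliftPerm.
Variables (k : nat) (s : 'S_k.+1) (j : 'I_k.+1).

(* The default [i] is never used, since [s j != s (lift j i)]. *)
Definition unlift_perm_fun (i : 'I_k) : 'I_k :=
  odflt i (unlift (s j) (s (lift j i))).

Lemma lift_unlift_perm_fun i : lift (s j) (unlift_perm_fun i) = s (lift j i).
Proof.
have sj_neq : s j != s (lift j i) by rewrite (inj_eq perm_inj) neq_lift.
rewrite /unlift_perm_fun; have [i' eq_i' ->] := unlift_some sj_neq.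
by rewrite eq_i'.
Qed.

Lemma unlift_perm_fun_inj : injective unlift_perm_fun.
Proof.
move=> a b eq_ab; apply/(lift_inj (h := j))/(perm_inj (s := s)).
by rewrite -!lift_unlift_perm_fun eq_ab.
Qed.

Definition unlift_perm : 'S_k := perm unlift_perm_fun_inj.

Lemma lift_unlift_perm i : lift (s j) (unlift_perm i) = s (lift j i).
Proof. by rewrite permE lift_unlift_perm_fun. Qed.

End UnliftPerm.

Arguments unlift_perm {k}.

Lemma pi_neq_perm (X : Type) (k : nat) (s : 'S_k.+1) (j : 'I_k.+1) (x : tup X k.+1) :
  pi_neq j ((fun i => x (s i)) : tup X k.+1)
  = ((fun i => pi_neq (s j) x (unlift_perm s j i)) : tup X k).
Proof. by apply: funext => i; rewrite /pi_neq lift_unlift_perm. Qed.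

Lemma beta_perm {X : Type} {k : nat} {mu : tup X k -> X} (s : 'S_k.+1) :
  is_symmetric mu ->
  {morph (fun x : tup X k.+1 => (fun i => x (s i)) : tup X k.+1) :
    x / beta mu x}.
Proof.
move=> mu_sym x; apply: funext => j.
by rewrite /beta pi_neq_perm mu_sym.
Qed.

Lemma beta_cst (X : Type) (k : nat) (mu : tup X k -> X) (x : X) :
  is_mean mu -> beta mu (cst_tup k.+1 x) = cst_tup k.+1 x.
Proof. by move=> mu_mean; apply: funext => j; exact: mu_mean. Qed.

Section BarycentricExtension.
Variables (X : topologicalType) (k : nat) (mu : tup X k -> X) (mut : tup X k.+1 -> X).
Hypothesis hX : hausdorff_space X.
Hypothesis cvg_beta_mut : forall x : tup X k.+1,
  (fun n => iter n (beta mu) x) @ \oo --> cst_tup k.+1 (mut x).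

Lemma mutE (i : 'I_k.+1) (x : tup X k.+1) (y : X) :
  (fun n => iter n (beta mu) x i) @ \oo --> y -> mut x = y.
Proof.
by move=> xy; apply: (cvg_unique hX _ xy); exact: cvg_ptws_app i (cvg_beta_mut x).
Qed.

Lemma mean_mut : is_mean mu -> is_mean mut.
Proof.
move=> mu_mean x; apply: (mutE ord0).
under eq_fun => n do rewrite iter_fix ?beta_cst //.
exact: cvg_cst.
Qed.

Lemma beta_invariant_mut : beta_invariant_ext mu mut.
Proof.
move=> x; apply: (mutE ord0).
have := cvg_succn (cvg_ptws_app ord0 (cvg_beta_mut x)).
by under eq_fun => n do rewrite iterSr.
Qed.

Lemma beta_invariant_ext_unique (nu : tup X k.+1 -> X) :
  continuous nu -> is_mean nu -> beta_invariant_ext mu nu -> nu = mut.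
Proof.
move=> nu_cont nu_mean nu_inv; apply: funext => x.
have nu_orbit n : nu (iter n (beta mu) x) = nu x.
  by rewrite (iter_morph (g := id) nu_inv) iter_fix.
rewrite -[RHS]nu_mean.
apply: (cvg_unique hX _ (cvg_comp _ _ (cvg_beta_mut x) (nu_cont _))) => /=.
under [X in X @ _ --> _]eq_fun => n do rewrite /= nu_orbit.
exact: cvg_cst.
Qed.

Lemma symmetric_mut : is_symmetric mu -> is_symmetric mut.
Proof.
move=> mu_sym s x; apply: (mutE ord0).
under eq_fun => n do rewrite -(iter_morph (beta_perm s mu_sym)).
exact: cvg_ptws_app (cvg_beta_mut x).
Qed.

End BarycentricExtension.

Theorem proposition2p4 (X : topologicalType) (hX : hausdorff_space X) (k : nat)
  (mu : {ptws 'I_k -> X} -> X) (hmean : is_mean mu) (hcont : continuous mu)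
  (hpc : power_convergent mu)
  (mut : {ptws 'I_k.+1 -> X} -> X)
  (hmut : forall x : {ptws 'I_k.+1 -> X},
     (fun n : nat => iter n (beta mu) x) @ \oo --> cst_tup k.+1 (mut x)) :
  (is_mean mut /\ beta_invariant_ext mu mut) /\
  (forall nu : {ptws 'I_k.+1 -> X} -> X,
     continuous nu -> is_mean nu -> beta_invariant_ext mu nu -> nu = mut) /\
  (is_symmetric mu -> is_symmetric mut).
Proof.
split; first by split; [exact: mean_mut | exact: beta_invariant_mut].
split; first exact: beta_invariant_ext_unique.
exact: symmetric_mut.
Qed.
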